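(* Let $R$ be a regular ring with unity, let $E$ be the biordered set of idempotents of $R$, and for $e\in E$ put $e'=1-e$. If $e,f\in E$ satisfy $f\,\omega\,e'$, then there is exactly one element of $E$ that belongs to both sandwich sets $S(e',f')$ and $S(f',e')$.
   Context: A ring is regular if for every $x$ there is $y$ with $xyx=x$. The biordered set $E$ of $R$ is the set of idempotents with the partial product $ef$ (computed in $R$) defined when $\{ef,fe\}\cap\{e,f\}\ne\emptyset$. In $E$: $f\,\omega^l\,e$ iff $fe=f$; $f\,\omega^r\,e$ iff $ef=f$; $\omega=\omega^l\cap\omega^r$; $M(e,f)=\{g\in E: ge=g,\ fg=g\}$; for $g,h\in M(e,f)$, $g\preceq h$ iff $eg\,\omega^r\,eh$ and $gf\,\omega^l\,hf$; and $S(e,f)=\{h\in M(e,f): g\preceq h\text{ for all }g\in M(e,f)\}$. *)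

From mathcomp Require Import all_boot all_algebra.
Set Implicit Arguments. Unset Strict Implicit. Unset Printing Implicit Defensive.
Import GRing.Theory.
Local Open Scope ring_scope.

Definition regular_ring (R : pzRingType) : Prop :=
  forall x : R, exists y : R, x * y * x = x.

Definition idem (R : pzRingType) (e : R) : Prop := e * e = e.

Definition omega_l (R : pzRingType) (f e : R) : Prop := f * e = f.
Definition omega_r (R : pzRingType) (f e : R) : Prop := e * f = f.
Definition omega (R : pzRingType) (f e : R) : Prop := omega_l f e /\ omega_r f e.

Definition compl (R : pzRingType) (e : R) : R := 1 - e.

Definition M_set (R : pzRingType) (e f g : R) : Prop :=
  idem g /\ g * e = g /\ f * g = g.

Definition sand_le (R : pzRingType) (e f g h : R) : Prop :=
  omega_r (e * g) (e * h) /\ omega_l (g * f) (h * f).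

Definition S_set (R : pzRingType) (e f h : R) : Prop :=
  M_set e f h /\ forall g : R, M_set e f g -> sand_le e f g h.

(* With f ω e' the idempotents e and f are orthogonal (ef = fe = 0), and then
   h = 1 - e - f = e'f' = f'e' is an idempotent.  An element g of M(e', f') is an
   idempotent with ge = fg = 0, and for such g one gets hg = e'g and gh = gf',
   which says exactly that g ⪯ h; hence h ∈ S(e', f') and, symmetrically,
   h ∈ S(f', e').  If k lies in both sandwich sets, then k is killed by e and f
   on both sides, so k = kh, and comparing h ∈ M(e', f') with k ∈ S(e', f')
   gives kh = h. *)
From mathcomp Require Import all_boot all_algebra.
Local Open Scope ring_scope.
Import GRing.Theory.

Section Complement.
Context {R : pzRingType}.
Implicit Types e g : R.

Lemma compl_mulr e g : compl e * g = g - e * g.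
Proof. by rewrite /compl mulrBl mul1r. Qed.

Lemma mulr_compl g e : g * compl e = g - g * e.
Proof. by rewrite /compl mulrBr mulr1. Qed.

Lemma subr_eq_self g x : g - x = g <-> x = 0.
Proof.
split=> [/eqP|->]; last by rewrite subr0.
by rewrite -subr_eq0 addrAC subrr add0r oppr_eq0 => /eqP.
Qed.

Lemma omega_l_compl g e : omega_l g (compl e) <-> g * e = 0.
Proof. rewrite /omega_l mulr_compl; exact: subr_eq_self. Qed.

Lemma omega_r_compl g e : omega_r g (compl e) <-> e * g = 0.
Proof. rewrite /omega_r compl_mulr; exact: subr_eq_self. Qed.

End Complement.

Section OrthogonalIdempotents.
Context {R : pzRingType} {e f : R}.
Hypotheses (he : idem e) (hf : idem f) (ef0 : e * f = 0) (fe0 : f * e = 0).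

Local Notation h := (1 - e - f).

Lemma mul_e_orth_compl : e * h = 0.
Proof. by rewrite !mulrBr mulr1 he ef0 subrr subr0. Qed.

Lemma mul_orth_compl_e : h * e = 0.
Proof. by rewrite !mulrBl mul1r he fe0 subrr subr0. Qed.

Lemma mul_f_orth_compl : f * h = 0.
Proof. by rewrite !mulrBr mulr1 hf fe0 subr0 subrr. Qed.

Lemma mul_orth_compl_f : h * f = 0.
Proof. by rewrite !mulrBl mul1r hf ef0 subr0 subrr. Qed.

Lemma idem_orth_compl : idem h.
Proof. by rewrite /idem !mulrBr mulr1 mul_orth_compl_e mul_orth_compl_f !subr0. Qed.

Lemma M_set_orth_compl : M_set (compl e) (compl f) h.
Proof.
split; first exact: idem_orth_compl.
by split; [apply/omega_l_compl/mul_orth_compl_e | apply/omega_r_compl/mul_f_orth_compl].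
Qed.

Lemma S_set_orth_compl : S_set (compl e) (compl f) h.
Proof.
split=> [|g [_ [/omega_l_compl ge0 /omega_r_compl fg0]]]; first exact: M_set_orth_compl.
have [_ [he' fh]] := M_set_orth_compl.
have eh : compl e * h = h by apply/omega_r_compl/mul_e_orth_compl.
have hf' : h * compl f = h by apply/omega_l_compl/mul_orth_compl_f.
split.
- rewrite /omega_r eh mulrA he'.
  by rewrite !mulrBl mul1r fg0 subr0.
- rewrite /omega_l hf' -mulrA fh.
  by rewrite !mulrBr mulr1 ge0 subr0.
Qed.

Lemma S_set_orth_compl_uniq k :
  S_set (compl e) (compl f) k -> M_set (compl f) (compl e) k -> k = h.
Proof.
move=> [[_ [/omega_l_compl ke0 _]] /(_ _ M_set_orth_compl) [kh _]] [_ [/omega_l_compl kf0 ek]].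
have eh : compl e * h = h by apply/omega_r_compl/mul_e_orth_compl.
move: kh; rewrite /omega_r ek eh.
by rewrite !mulrBr mulr1 ke0 kf0 !subr0.
Qed.

End OrthogonalIdempotents.

Theorem proposition2p4 (R : pzRingType) (hR : regular_ring R) (e f : R)
  (he : idem e) (hf : idem f) (hfe : omega f (compl e)) :
  exists! h : R, idem h /\ S_set (compl e) (compl f) h /\ S_set (compl f) (compl e) h.
Proof.
case: hfe => /omega_l_compl fe0 /omega_r_compl ef0.
have Sef := S_set_orth_compl he hf ef0 fe0.
have Sfe := S_set_orth_compl hf he fe0 ef0; rewrite addrAC in Sfe.
exists (1 - e - f); split; first by split; [exact: idem_orth_compl | split].
by move=> k [_ [Sk [Mk _]]]; rewrite (S_set_orth_compl_uniq he hf ef0 fe0 k Sk Mk).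
Qed.
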